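(* Let $\alpha,\beta\in\mathsf{Lab}\uplus\underline{\mathsf{Lab}}$ with $\mathsf{und}(\alpha)=(p_\alpha,Rd_\alpha,Wt_\alpha)$, $\mathsf{und}(\beta)=(p_\beta,Rd_\beta,Wt_\beta)$, $Wt_\alpha\subseteq Rd_\alpha$, $Wt_\beta\subseteq Rd_\beta$ and $\alpha\;\iota_{lab}\;\beta$. Suppose $A\to_{ann}^{\alpha}A'$ and $A\to_{ann}^{\beta}A''$. Then $A''\to_{ann}^{\alpha}A'''$ where $A'''=A''\odot^{\alpha}\mathsf{diff}(A\to_{ann}^{\alpha}A')$.
   Context: Fix a set $\mathcal{R}$ of memory resources. Let $\mathsf{PID}=(\mathbb{N}_+)^*$ be the set of finite words over the positive integers, with $\preceq$ the prefix order. An annotation DAG is a triple $A=(V,E_R,E_W)$ such that: (1) $V\subseteq(\mathsf{PID}\times\mathbb{N})\cup\{\bot\}$ is finite, $\bot\in V$, and $(p,n)\in V$ implies $(p,n')\in V$ for all $n'\le n$; (2) $E_R,E_W\subseteq V\times\mathcal{R}\times V$, and $(v',r,v),(v'',r,v)\in E_R\cup E_W$ implies $v'=v''$; (3) $E_R\cap E_W=\varnothing$ and the directed graph $(V,E_R\cup E_W)$ is acyclic; (4) if $(v',r,v)\in E_W$ and $v'\neq\bot$ then $(v'',r,v')\in E_W$ for some $v''$; (5) $(v,r,v'),(v,r,v'')\in E_W$ implies $v'=v''$. For $r\in\mathcal{R}$, $\mathsf{last}(r,E_W)$ is $\bot$ if $E_W$ has no edge labelled $r$, and otherwise is the final node of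 the unique path from $\bot$ consisting of all $E_W$-edges labelled $r$. For $p\in\mathsf{PID}$, $\mathsf{max}_p(V)=\max\{n:(p,n)\in V\}$, or $-1$ if there is no such $n$. Let $\mathsf{Lab}=\mathsf{PID}\times2^{\mathcal{R}}\times2^{\mathcal{R}}$ and $\underline{\mathsf{Lab}}=\{\underline{a}:a\in\mathsf{Lab}\}$ a disjoint copy; $\mathsf{und}(a)=\mathsf{und}(\underline a)=a$. For $a=(p,Rd,Wt)\in\mathsf{Lab}$ and annotation DAGs $A_1=(V_1,E_{R1},E_{W1})$, $A_2=(V_2,E_{R2},E_{W2})$, write $A_1\to_{ann}^{a}A_2$ iff, with $v=(p,\mathsf{max}_p(V_1)+1)$ and $\mathsf{newedge}(r,E_W,v)=(\mathsf{last}(r,E_W),r,v)$: $V_2=V_1\cup\{v\}$, $E_{R2}=E_{R1}\cup\{\mathsf{newedge}(r,E_{W1},v): r\in Rd\setminus Wt\}$, $E_{W2}=E_{W1}\cup\{\mathsf{newedge}(r,E_{W1},v): r\in Wt\}$; and write $A_2\to_{ann}^{\underline a}A_1$ iff $A_1\to_{ann}^{a}A_2$. For $\alpha,\beta\in\mathsf{Lab}\uplus\underline{\mathsf{Lab}}$ with $\mathsf{und}(\alpha)=(p_1,Rd_1,Wt_1)$, $\mathsf{und}(\beta)=(p_2,Rd_2,Wt_2)$, define $\alpha\;\iota_{lab}\;\beta$ iff $p_1\not\preceq p_2$, $p_2\not\preceq p_1$, $Rd_1\cap Wt_2=\varnothing$ and $Rd_2\cap Wt_1=\varnothing$. For $o:(V,E_R,E_W)\to_{ann}^{\alpha}(V',E'_R,E'_W)$,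 $\mathsf{diff}(o)=(V'\setminus V,E'_R\setminus E_R,E'_W\setminus E_W)$ if $\alpha\in\mathsf{Lab}$ and $\mathsf{diff}(o)=(V\setminus V',E_R\setminus E'_R,E_W\setminus E'_W)$ if $\alpha\in\underline{\mathsf{Lab}}$. Also $(V,E_R,E_W)\odot^{\alpha}(\Delta V,\Delta E_R,\Delta E_W)$ is $(V\cup\Delta V,E_R\cup\Delta E_R,E_W\cup\Delta E_W)$ if $\alpha\in\mathsf{Lab}$ and $(V\setminus\Delta V,E_R\setminus\Delta E_R,E_W\setminus\Delta E_W)$ if $\alpha\in\underline{\mathsf{Lab}}$. (In the paper, labels arise from basic blocks for which the set of written resources is contained in the set of read resources; this is recorded here as the hypothesis $Wt\subseteq Rd$.) *)

From mathcomp Require Import all_boot.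
From mathcomp Require Import boolp classical_sets cardinality.
From Stdlib Require Import Relation_Operators.

Set Implicit Arguments.
Unset Strict Implicit.
Unset Printing Implicit Defensive.

Local Open Scope classical_set_scope.

(* Process identifiers: finite words over positive integers, represented as
   sequences of naturals all of whose letters are positive. *)
Definition PID := seq nat.
Definition pid_ok (p : PID) : Prop := all (fun n => 0 < n) p.

Definition pid_le (p q : PID) : Prop := prefix p q.

Definition node := option (PID * nat).
Definition bot : node := None.

Section Ann.
Variable R : Type.   (* the set of memory resources *)

Definition edge := (node * R * node)%type.

Record adag := ADag { aV : set node; aER : set edge; aEW : set edge }.

Definition adj (E : set edge) (x y : node) : Prop := exists r, E (x, r, y).
Definition acyclic (E : set edge) : Prop :=
  forall x, ~ clos_trans node (adj E) x x.

Definition is_ann_dag (A : adag) : Prop :=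
  let V := aV A in let ER := aER A in let EW := aEW A in
  finite_set V /\ V bot /\
  (forall p n, V (Some (p, n)) -> pid_ok p) /\
  (forall p n n', V (Some (p, n)) -> n' <= n -> V (Some (p, n'))) /\
  (forall e, (ER `|` EW) e -> V e.1.1 /\ V e.2) /\
  (forall v' v'' r v, (ER `|` EW) (v', r, v) -> (ER `|` EW) (v'', r, v) -> v' = v'') /\
  ER `&` EW = set0 /\ acyclic (ER `|` EW) /\
  (forall v' r v, EW (v', r, v) -> v' <> bot -> exists v'', EW (v'', r, v')) /\
  (forall v r v' v'', EW (v, r, v') -> EW (v, r, v'') -> v' = v'').

(* v is the final node of a path from bot whose edge set is exactly the set of
   EW-edges labelled r (the empty path, ending in bot, when there is no such
   edge). *)
Definition is_last (r : R) (EW : set edge) (v : node) : Prop :=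
  exists s : seq node,
    (forall x y, EW (x, r, y) <->
       exists i, i < size s /\ nth bot (bot :: s) i = x /\ nth bot s i = y) /\
    v = last bot s.

(* last(r, E_W): well defined (unique) on annotation DAGs. *)
Definition lastw (r : R) (EW : set edge) : node := xget bot (is_last r EW).

(* max_p(V), with None standing for -1. *)
Definition maxp (p : PID) (V : set node) : option nat :=
  xget None (fun o => match o with
    | None => ~ exists n, V (Some (p, n))
    | Some n => V (Some (p, n)) /\ forall m, V (Some (p, m)) -> m <= n
    end).

Definition nextidx (p : PID) (V : set node) : nat :=
  match maxp p V with None => 0 | Some n => n.+1 end.

Definition newedge (r : R) (EW : set edge) (v : node) : edge := (lastw r EW, r, v).

Record lab := Lab { lpid : PID; lrd : set R; lwt : set R }.
Inductive elab := Fwd of lab | Bwd of lab.   (* Bwd a is the underlined a *)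

Definition und (x : elab) : lab := match x with Fwd a => a | Bwd a => a end.

Definition ann_step (a : lab) (A1 A2 : adag) : Prop :=
  is_ann_dag A1 /\ is_ann_dag A2 /\
  let v : node := Some (lpid a, nextidx (lpid a) (aV A1)) in
  aV A2 = aV A1 `|` [set v] /\
  aER A2 = aER A1 `|` [set newedge r (aEW A1) v | r in lrd a `\` lwt a] /\
  aEW A2 = aEW A1 `|` [set newedge r (aEW A1) v | r in lwt a].

Definition ann (x : elab) (A1 A2 : adag) : Prop :=
  match x with
  | Fwd a => ann_step a A1 A2
  | Bwd a => ann_step a A2 A1
  end.

Definition iota_lab (x y : elab) : Prop :=
  let: Lab p1 Rd1 Wt1 := und x in
  let: Lab p2 Rd2 Wt2 := und y in
  ~ pid_le p1 p2 /\ ~ pid_le p2 p1 /\ Rd1 `&` Wt2 = set0 /\ Rd2 `&` Wt1 = set0.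

Definition diff (x : elab) (A A' : adag) : adag :=
  match x with
  | Fwd _ => ADag (aV A' `\` aV A) (aER A' `\` aER A) (aEW A' `\` aEW A)
  | Bwd _ => ADag (aV A `\` aV A') (aER A `\` aER A') (aEW A `\` aEW A')
  end.

Definition odot (x : elab) (A D : adag) : adag :=
  match x with
  | Fwd _ => ADag (aV A `|` aV D) (aER A `|` aER D) (aEW A `|` aEW D)
  | Bwd _ => ADag (aV A `\` aV D) (aER A `\` aER D) (aEW A `\` aEW D)
  end.

End Ann.

From mathcomp Require Import all_boot.
From mathcomp Require Import boolp classical_sets cardinality finmap.
From Stdlib Require Import Relation_Operators Operators_Properties.

Set Implicit Arguments.
Unset Strict Implicit.
Unset Printing Implicit Defensive.

Local Open Scope classical_set_scope.

(* A step along a = (p, Rd, Wt) extends a DAG X by the fresh node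
   (p, max_p(X) + 1) and by edges into it from the last writers of the resources
   in Rd.  If b is independent of a, a b-step creates no node of process p and
   changes the last writer of no resource in Rd (Wt ⊆ Rd and Rd ∩ Wt_b = ∅), so
   the a-extension is the same before and after the b-step; in particular the
   a- and b-extensions commute.  It remains to see that the graphs so obtained
   are annotation DAGs: extending an annotation DAG by a step gives one as soon
   as the last writers of the written resources have no outgoing write edge on
   them, which is inherited from the given a-step; and a graph whose a- and
   b-extensions are both annotation DAGs is one itself. *)

Lemma finite_set_pid_bounded (V : set node) (p : PID) : finite_set V ->
  exists b, forall n, V (Some (p, n)) -> n <= b.
Proof.
pose idx (o : node) := if o is Some (_, n) then n else 0.
move=> /(finite_image idx) /finite_fsetP[X eX].
exists (\max_(i <- X) i) => n Vn.
have nX : [set` X] n by rewrite -eX; exists (Some (p, n)).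
exact: (@leq_bigmax_seq _ _ xpredT id n nX).
Qed.

Definition is_maxp (p : PID) (V : set node) (o : option nat) : Prop :=
  match o with
  | None => ~ exists n, V (Some (p, n))
  | Some n => V (Some (p, n)) /\ forall m, V (Some (p, m)) -> m <= n
  end.

Lemma maxpP (p : PID) (V : set node) : finite_set V -> is_maxp p V (maxp p V).
Proof.
move=> fV; apply: (@xgetPex _ None (is_maxp p V)).
have [[n Vn]|noV] := pselect (exists n, V (Some (p, n))); last by exists None.
have [b Vb] := finite_set_pid_bounded p fV.
have exV : exists n, `[< V (Some (p, n)) >] by exists n; apply/asboolP.
have [m /asboolP Vm maxm] := ex_maxnP exV (fun n Vn => Vb n (asboolW Vn)).
by exists (Some m); split=> // k Vk; apply/maxm/asboolP.
Qed.

Lemma nextidx_gt (p : PID) (V : set node) n :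
  finite_set V -> V (Some (p, n)) -> n < nextidx p V.
Proof.
move=> /(maxpP p); rewrite /nextidx.
by case: (maxp p V) => [m [_ maxm] /maxm|noV Vn]; [|case: noV; exists n].
Qed.

Lemma lt_nextidx (p : PID) (V : set node) n : finite_set V -> n < nextidx p V ->
  exists2 m, V (Some (p, m)) & n <= m.
Proof.
move=> /(maxpP p); rewrite /nextidx; case: (maxp p V) => [m [Vm _]|_] //.
by rewrite ltnS => le_nm; exists m.
Qed.

Lemma eq_nextidx (p : PID) (V1 V2 : set node) :
  (forall n, V1 (Some (p, n)) <-> V2 (Some (p, n))) -> nextidx p V1 = nextidx p V2.
Proof.
move=> eV; rewrite /nextidx; suff -> : maxp p V1 = maxp p V2 by [].
congr xget; apply/funext => -[n|] /=; apply/propext.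
  by split=> -[Vn maxn]; split=> [|m /eV]; by [apply/eV | apply: maxn].
by split=> noV [n /eV Vn]; apply: noV; exists n.
Qed.

Lemma clos_trans_mono T (R1 R2 : T -> T -> Prop) x y :
  (forall u v, R1 u v -> R2 u v) -> clos_trans T R1 x y -> clos_trans T R2 x y.
Proof.
move=> sub12; elim=> [u v /sub12|u v w _ IHuv _ IHvw]; first exact: t_step.
exact: t_trans IHuv IHvw.
Qed.

Lemma clos_trans_restrict T (R1 R2 : T -> T -> Prop) x y :
  (forall u v, R1 u v -> (exists w, R1 v w) -> R2 u v) ->
  clos_trans T R1 x y -> (exists w, R1 y w) -> clos_trans T R2 x y.
Proof.
move=> sub12 /(@clos_trans_t1n _ _ _ _); elim=> [u v uv vw|u v w uv vw IH yz].
  exact/t_step/sub12.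
apply: t_trans (IH yz); apply/t_step/sub12 => //.
by case: vw => [z vz|z z' vz _]; exists z.
Qed.

Lemma clos_trans_out T (R1 : T -> T -> Prop) x y :
  clos_trans T R1 x y -> exists z, R1 x z.
Proof. by elim=> [u v uv|u v w _ [z uz] _ _]; [exists v|exists z]. Qed.

Section AnnotationDag.
Variable R : Type.
Implicit Types (a b : lab R) (X Y Z D W : adag R) (E : set (edge R)).

Definition adag_union X D : adag R :=
  ADag (aV X `|` aV D) (aER X `|` aER D) (aEW X `|` aEW D).
Definition adag_diff X D : adag R :=
  ADag (aV X `\` aV D) (aER X `\` aER D) (aEW X `\` aEW D).
Definition adag_sub D X : Prop :=
  [/\ aV D `<=` aV X, aER D `<=` aER X & aEW D `<=` aEW X].

Lemma adag_diffAC X D1 D2 :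
  adag_diff (adag_diff X D1) D2 = adag_diff (adag_diff X D2) D1.
Proof. by rewrite /adag_diff /=; congr ADag; rewrite !setDDl setUC. Qed.

Lemma adag_diffKU X D : adag_sub D X -> adag_union (adag_diff X D) D = X.
Proof. by case: X => V ER EW [/= sV sER sEW]; rewrite /adag_union /= !setDKU. Qed.

Lemma eq_lastw r E1 E2 : (forall x y, E1 (x, r, y) <-> E2 (x, r, y)) ->
  lastw r E1 = lastw r E2.
Proof.
move=> eE; rewrite /lastw; congr xget; apply/funext => v; apply/propext.
by split=> -[s [Es ->]]; exists s; split=> // x y; rewrite -Es ?eE.
Qed.

Lemma lastw_in_edge r E z : lastw r E = Some z -> exists y, E (y, r, Some z).
Proof.
rewrite /lastw; have [exE|noE] := pselect (exists v, is_last r E v); last first.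
  by rewrite xgetPN // => v Ev; apply: noE; exists v.
have [s [Es ->]] := xgetPex bot exE.
case/lastP: s Es => [|s w] Es //; rewrite last_rcons => Ew; subst w.
exists (nth bot (bot :: rcons s (Some z)) (size s)); apply/Es.
by exists (size s); rewrite size_rcons nth_rcons ltnn eqxx.
Qed.

Lemma ann_dag_finite X : is_ann_dag X -> finite_set (aV X).
Proof. by case. Qed.

Lemma ann_dag_bot X : is_ann_dag X -> aV X bot.
Proof. by case=> _ []. Qed.

Lemma ann_dag_acyclic X : is_ann_dag X -> acyclic (aER X `|` aEW X).
Proof. by case=> _ [_ [_ [_ [_ [_ [_ []]]]]]]. Qed.

Lemma ann_dag_ends X e : is_ann_dag X -> (aER X `|` aEW X) e -> aV X e.1.1 /\ aV X e.2.
Proof. by case=> _ [_ [_ [_ [ends _]]]]; apply: ends. Qed.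

Lemma lastw_in_V r X : is_ann_dag X -> aV X (lastw r (aEW X)).
Proof.
move=> dX; case Er: (lastw r (aEW X)) => [z|]; last exact: ann_dag_bot.
by have [y Ey] := lastw_in_edge Er; apply: (ann_dag_ends dX (or_intror Ey)).2.
Qed.

Definition fresh_node a X : node := Some (lpid a, nextidx (lpid a) (aV X)).

Definition step_delta a X : adag R :=
  let v := fresh_node a X in
  ADag [set v] [set newedge r (aEW X) v | r in lrd a `\` lwt a]
    [set newedge r (aEW X) v | r in lwt a].

Definition extend a X : adag R := adag_union X (step_delta a X).

Lemma ann_stepE a X Y :
  ann_step a X Y <-> [/\ is_ann_dag X, is_ann_dag Y & Y = extend a X].
Proof.
split=> [[dX [dY eY]]|[dX dY eY]]; last by subst Y; split=> //; split.
by case: Y dY eY => V ER EW dY /= [eV [eER eEW]]; subst V ER EW; split.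
Qed.

Lemma fresh_node_notin a X : is_ann_dag X -> ~ aV X (fresh_node a X).
Proof. by move=> dX /(nextidx_gt (ann_dag_finite dX)); rewrite ltnn. Qed.

Lemma fresh_node_no_in_edge a X e : is_ann_dag X ->
  (aER X `|` aEW X) e -> e.2 <> fresh_node a X.
Proof. by move=> dX /(ann_dag_ends dX)[_ + ev]; rewrite ev; apply: fresh_node_notin. Qed.

Lemma step_delta_edge a X x r y :
  (aER (step_delta a X) `|` aEW (step_delta a X)) (x, r, y) ->
  x = lastw r (aEW X) /\ y = fresh_node a X.
Proof. by case=> -[r' _ [<- <- <-]]. Qed.

Lemma step_delta_wt_label a X x r y : aEW (step_delta a X) (x, r, y) -> lwt a r.
Proof. by case=> r' wr [_ <- _]. Qed.

Lemma step_delta_disjoint a X : is_ann_dag X ->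
  [/\ aV X `&` aV (step_delta a X) `<=` set0,
      aER X `&` aER (step_delta a X) `<=` set0 &
      aEW X `&` aEW (step_delta a X) `<=` set0].
Proof.
move=> dX; have notin e : (aER (step_delta a X) `|` aEW (step_delta a X)) e ->
    ~ (aER X `|` aEW X) e.
  by case: e => [[x r] y] /step_delta_edge[_ ey] /(fresh_node_no_in_edge dX)/(_ ey).
split=> [x [Xx /= ex]|e [Xe De]|e [Xe De]]; first by subst x; exact: fresh_node_notin Xx.
- by apply: (notin e); [left|left].
- by apply: (notin e); [right|right].
Qed.

Lemma diff_extend_base a X : is_ann_dag X -> adag_diff (extend a X) X = step_delta a X.
Proof. by move=> /(step_delta_disjoint a)[dV dER dEW]; rewrite /adag_diff /= !setUKD. Qed.

Lemma diff_extend_delta a X : is_ann_dag X ->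
  adag_diff (extend a X) (step_delta a X) = X.
Proof.
case: X => V ER EW /(step_delta_disjoint a)[dV dER dEW].
by rewrite /adag_diff /= !setUDK // setIC.
Qed.

Lemma ann_dag_of_extend a X : is_ann_dag (extend a X) ->
  (forall e, (aER X `|` aEW X) e -> aV X e.1.1 /\ aV X e.2) -> is_ann_dag X.
Proof.
move=> [fin [bt [pok [down [_ [uniq [disj [acyc [pred wuniq]]]]]]]]] endsX.
have finX : finite_set (aV X) by apply: sub_finite_set fin => x; left.
have subE e : (aER X `|` aEW X) e -> (aER (extend a X) `|` aEW (extend a X)) e.
  by case=> ?; [left|right]; left.
split=> //; split; first by case: bt.
split; first by move=> p n Xn; apply: (pok p n); left.
split.
  move=> p n n' Xn le_n'n; case: (down p n n' (or_introl Xn) le_n'n) => // -[ep en'].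
  by have := nextidx_gt finX Xn; rewrite ep -en' ltnNge le_n'n.
split=> //; split; first by move=> v' v'' r v /subE e1 /subE e2; apply: uniq e1 e2.
split; first by rewrite -subset0 -disj => e [Re We]; split; left.
split.
  by move=> x xx; apply: (acyc x); apply: clos_trans_mono xx => u v [r /subE]; exists r.
split; last by move=> v r v' v'' W1 W2; apply: (wuniq v r); left.
move=> v' r v Wv nbot; have [v'' [W''|Dv'']] := pred v' r v (or_introl Wv) nbot.
  by exists v''.
have [_ ev'] := step_delta_edge (or_intror Dv'').
have := (endsX _ (or_intror Wv)).1; rewrite /= ev'.
by move=> /(nextidx_gt finX); rewrite ltnn.
Qed.

Lemma eq_step_delta a X Y : lwt a `<=` lrd a ->
  (forall n, aV X (Some (lpid a, n)) <-> aV Y (Some (lpid a, n))) ->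
  (forall x r y, lrd a r -> aEW X (x, r, y) <-> aEW Y (x, r, y)) ->
  step_delta a X = step_delta a Y.
Proof.
move=> wt_rd eV eEW; rewrite /step_delta /fresh_node (eq_nextidx eV).
have eL r : lrd a r -> lastw r (aEW X) = lastw r (aEW Y).
  by move=> ar; apply: eq_lastw => x y; apply: eEW.
congr ADag; apply: eq_imagel => r; rewrite /newedge.
  by case=> /eL ->.
by move=> /wt_rd/eL ->.
Qed.

(* True on every annotation DAG, since [lastw r] ends the r-labelled write path;
   we only need it where [extend_lastw_final] provides it. *)
Definition lastw_final a Y : Prop :=
  forall r, lwt a r -> forall w, ~ aEW Y (lastw r (aEW Y), r, w).

Lemma extend_lastw_final a X :
  is_ann_dag X -> is_ann_dag (extend a X) -> lastw_final a X.
Proof.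
move=> dX [_ [_ [_ [_ [_ [_ [_ [_ [_ wuniq]]]]]]]]] r wr w Ew.
have new : aEW (step_delta a X) (lastw r (aEW X), r, fresh_node a X) by exists r.
have ew := wuniq _ r _ _ (or_introl Ew) (or_intror new).
by have := (ann_dag_ends dX (or_intror Ew)).2; rewrite /= ew; apply: fresh_node_notin.
Qed.

Lemma eq_lastw_final a X Y : lwt a `<=` lrd a ->
  (forall x r y, lrd a r -> aEW X (x, r, y) <-> aEW Y (x, r, y)) ->
  lastw_final a X <-> lastw_final a Y.
Proof.
move=> wt_rd eEW; split=> fin r wr w; have ar := wt_rd r wr.
  by rewrite -(eq_lastw (fun x y => eEW x r y ar)) => /(eEW _ _ _ ar) /fin.
by rewrite (eq_lastw (fun x y => eEW x r y ar)) => /(eEW _ _ _ ar) /fin.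
Qed.

Lemma extend_edgeP a Y e :
  (aER (extend a Y) `|` aEW (extend a Y)) e <->
  (aER Y `|` aEW Y) e \/ (aER (step_delta a Y) `|` aEW (step_delta a Y)) e.
Proof. rewrite /=; tauto. Qed.

Lemma extend_no_out a Y r w : is_ann_dag Y ->
  ~ (aER (extend a Y) `|` aEW (extend a Y)) (fresh_node a Y, r, w).
Proof.
move=> dY; case/extend_edgeP=> [/(ann_dag_ends dY)[/fresh_node_notin //]|].
case/step_delta_edge=> ev _; move: (lastw_in_V r dY).
by rewrite -ev; apply: fresh_node_notin.
Qed.

Lemma extend_acyclic a Y : is_ann_dag Y ->
  acyclic (aER (extend a Y) `|` aEW (extend a Y)).
Proof.
move=> dY x cyc; apply: (ann_dag_acyclic dY).
apply: clos_trans_restrict cyc (clos_trans_out cyc) => u w [r Euw] [z [r' Ewz]].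
exists r; case/extend_edgeP: Euw => // /step_delta_edge[_ ew].
by move: Ewz; rewrite /= ew => /(extend_no_out dY).
Qed.

Lemma extend_down_closed a Y p n n' : is_ann_dag Y ->
  aV (extend a Y) (Some (p, n)) -> n' <= n -> aV (extend a Y) (Some (p, n')).
Proof.
case=> fin [_ [_ [down _]]] [Yn le_n'n|]; first by left; apply: down Yn le_n'n.
rewrite /fresh_node => -[-> en]; rewrite leq_eqVlt => /orP[/eqP ->|lt_n'n].
  by right; rewrite en.
have [m Ym le_n'm] := lt_nextidx fin (leq_trans lt_n'n (eq_leq en)).
by left; apply: down Ym le_n'm.
Qed.

Lemma ann_dag_extend a Y : is_ann_dag Y -> pid_ok (lpid a) -> lastw_final a Y ->
  is_ann_dag (extend a Y).
Proof.
move=> dY pid_a finY; have old_target e := @fresh_node_no_in_edge a Y e dY.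
have [fin [bt [pok [_ [ends [uniq [disj [_ [pred wuniq]]]]]]]]] := dY.
split; first by rewrite finite_setU; split=> //; apply: finite_set1.
split; first by left.
split; first by move=> p n [/pok //|[-> _]].
split; first by move=> p n n'; apply: extend_down_closed.
split.
  move=> [[x r] y] /extend_edgeP[/ends[Yx Yy]|/step_delta_edge[-> ->]].
    by split; left.
  by split; [left; apply: lastw_in_V|right].
split.
  move=> v' v'' r w.
  case/extend_edgeP=> [E1|/step_delta_edge[-> e1]];
    case/extend_edgeP=> [E2|/step_delta_edge[-> e2]] //.
  - exact: uniq E1 E2.
  - by case: (old_target _ E1 e2).
  - by case: (old_target _ E2 e1).
split.
  rewrite -subset0 => -[[x r] y] [[ER1|DR1] [EW1|DW1]].
  - by rewrite -disj.
  - by case: (old_target _ (or_introl ER1)); case: (step_delta_edge (or_intror DW1)).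
  - by case: (old_target _ (or_intror EW1)); case: (step_delta_edge (or_introl DR1)).
  - case: DR1 => r' [_ nwr'] [_ er' _]; subst r'.
    exact: nwr' (step_delta_wt_label DW1).
split; first exact: extend_acyclic.
split.
  move=> v' r w [Ew|Dw] nbot.
    by have [v'' Ev''] := pred _ _ _ Ew nbot; exists v''; left.
  have [ev' _] := step_delta_edge (or_intror Dw); move: nbot; rewrite ev'.
  case Er: (lastw r (aEW Y)) => [z|] // _.
  by have [y Ey] := lastw_in_edge Er; exists y; left.
move=> x r w1 w2 [E1|D1] [E2|D2]; first exact: wuniq E1 E2.
- have [ex _] := step_delta_edge (or_intror D2).
  by case: (finY r (step_delta_wt_label D2) w1); rewrite -ex.
- have [ex _] := step_delta_edge (or_intror D1).
  by case: (finY r (step_delta_wt_label D1) w2); rewrite -ex.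
- have [_ ->] := step_delta_edge (or_intror D1).
  by case: (step_delta_edge (or_intror D2)).
Qed.

Section Independence.
Variables a b : lab R.
Hypotheses (pid_ab : lpid a <> lpid b) (rd_a_wt_b : forall r, lrd a r -> ~ lwt b r).

Lemma fresh_node_neq X W : fresh_node a X <> fresh_node b W.
Proof. by case. Qed.

Lemma step_delta_other_node W n : ~ aV (step_delta b W) (Some (lpid a, n)).
Proof. by case. Qed.

Lemma step_delta_other_edge W x r y : lrd a r -> ~ aEW (step_delta b W) (x, r, y).
Proof. by move=> /rd_a_wt_b ar /step_delta_wt_label. Qed.

Lemma extend_slice X :
  (forall n, aV (extend b X) (Some (lpid a, n)) <-> aV X (Some (lpid a, n))) /\
  (forall x r y, lrd a r -> aEW (extend b X) (x, r, y) <-> aEW X (x, r, y)).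
Proof.
split=> [n|x r y ar]; split=> [[//|]|]; try by left.
  by move/step_delta_other_node.
by move/(step_delta_other_edge ar).
Qed.

Lemma diff_slice X W :
  (forall n, aV (adag_diff X (step_delta b W)) (Some (lpid a, n)) <->
     aV X (Some (lpid a, n))) /\
  (forall x r y, lrd a r ->
     aEW (adag_diff X (step_delta b W)) (x, r, y) <-> aEW X (x, r, y)).
Proof.
split=> [n|x r y ar]; split=> [[]//|Xe]; split=> //.
  exact: step_delta_other_node.
exact: step_delta_other_edge.
Qed.

Lemma ann_dag_of_extends X :
  is_ann_dag (extend a X) -> is_ann_dag (extend b X) -> is_ann_dag X.
Proof.
move=> dXa dXb; apply: (ann_dag_of_extend dXa) => e Xe.
have sub c : (aER (extend c X) `|` aEW (extend c X)) e.
  by case: Xe => Xe; [left|right]; left.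
have inX z : aV (extend a X) z -> aV (extend b X) z -> aV X z.
  by move=> [//|->] [//|/fresh_node_neq[]].
have [xa ya] := ann_dag_ends dXa (sub a); have [xb yb] := ann_dag_ends dXb (sub b).
by split; apply: inX.
Qed.

Hypothesis wt_rd_a : lwt a `<=` lrd a.

Lemma step_delta_extend X : step_delta a (extend b X) = step_delta a X.
Proof. by have [eV eEW] := extend_slice X; apply: eq_step_delta. Qed.

Lemma step_delta_diff X W : step_delta a (adag_diff X (step_delta b W)) = step_delta a X.
Proof. by have [eV eEW] := diff_slice X W; apply: eq_step_delta. Qed.

Lemma lastw_final_extend X : lastw_final a (extend b X) <-> lastw_final a X.
Proof. by have [_ eEW] := extend_slice X; apply: eq_lastw_final. Qed.

Lemma step_delta_sub_diff X W :
  adag_sub (step_delta a X) (adag_diff (extend a X) (step_delta b W)).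
Proof.
have target_neq e : (aER (step_delta a X) `|` aEW (step_delta a X)) e ->
    ~ (aER (step_delta b W) `|` aEW (step_delta b W)) e.
  by case: e => [[x r] y] /step_delta_edge[_ ->] /step_delta_edge[_ /fresh_node_neq].
split=> [v /= ev|e De|e De]; split; try by right.
- by rewrite ev; apply: fresh_node_neq.
- by move=> Db; apply: (target_neq e); left.
- by move=> Db; apply: (target_neq e); right.
Qed.

End Independence.

Section Commutation.
Variables a b : lab R.
Hypotheses (pid_a : pid_ok (lpid a)) (pid_b : pid_ok (lpid b)).
Hypotheses (wt_rd_a : lwt a `<=` lrd a) (wt_rd_b : lwt b `<=` lrd b).
Hypothesis pid_ab : lpid a <> lpid b.
Hypotheses (rd_a_wt_b : forall r, lrd a r -> ~ lwt b r)
  (rd_b_wt_a : forall r, lrd b r -> ~ lwt a r).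

Let pid_ba : lpid b <> lpid a := nesym pid_ab.

Lemma extend_comm X : extend a (extend b X) = extend b (extend a X).
Proof.
rewrite {1}/extend (step_delta_extend pid_ab rd_a_wt_b wt_rd_a).
rewrite {2}/extend (step_delta_extend pid_ba rd_b_wt_a wt_rd_b).
by rewrite /extend /adag_union /=; congr ADag; apply: setUAC.
Qed.

Lemma commute_fwd_fwd A A' A'' : ann_step a A A' -> ann_step b A A'' ->
  ann_step a A'' (adag_union A'' (adag_diff A' A)).
Proof.
move=> /ann_stepE[dA dA' eA'] /ann_stepE[_ dA'' eA'']; subst A' A''.
rewrite (diff_extend_base a dA) -(step_delta_extend pid_ab rd_a_wt_b wt_rd_a).
apply/ann_stepE; split=> //; apply: ann_dag_extend => //.
by apply/(lastw_final_extend pid_ab rd_a_wt_b wt_rd_a)/extend_lastw_final.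
Qed.

Lemma commute_fwd_bwd A A' A'' : ann_step a A A' -> ann_step b A'' A ->
  ann_step a A'' (adag_union A'' (adag_diff A' A)).
Proof.
move=> /ann_stepE[dA dA' eA'] /ann_stepE[dA'' _ eA]; subst A' A.
rewrite (diff_extend_base a dA) (step_delta_extend pid_ab rd_a_wt_b wt_rd_a).
apply/ann_stepE; split=> //; apply: ann_dag_extend => //.
by apply/(lastw_final_extend pid_ab rd_a_wt_b wt_rd_a)/extend_lastw_final.
Qed.

Lemma commute_bwd_fwd A A' A'' : ann_step a A' A -> ann_step b A A'' ->
  ann_step a (adag_diff A'' (adag_diff A A')) A''.
Proof.
move=> /ann_stepE[dA' dA eA] /ann_stepE[_ dA'' eA'']; subst A A''.
rewrite (diff_extend_base a dA') -extend_comm.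
have dA'b : is_ann_dag (extend b A').
  apply: ann_dag_extend => //.
  by apply/(lastw_final_extend pid_ba rd_b_wt_a wt_rd_b)/extend_lastw_final.
rewrite -{1}(step_delta_extend pid_ab rd_a_wt_b wt_rd_a A') (diff_extend_delta a dA'b).
by apply/ann_stepE; split=> //; rewrite extend_comm.
Qed.

Lemma commute_bwd_bwd A A' A'' : ann_step a A' A -> ann_step b A'' A ->
  ann_step a (adag_diff A'' (adag_diff A A')) A''.
Proof.
move=> /ann_stepE[dA' dA eA] /ann_stepE[dA'' _ eA2].
have eA' : A' = adag_diff A (step_delta a A') by rewrite eA (diff_extend_delta a dA').
have eA'' : A'' = adag_diff A (step_delta b A'').
  by rewrite eA2 (diff_extend_delta b dA'').
rewrite eA (diff_extend_base a dA'); set Z := adag_diff A'' (step_delta a A').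
have eZ : Z = adag_diff A' (step_delta b A'').
  by rewrite /Z {1}eA'' adag_diffAC -eA'.
have ext_a : extend a Z = A''.
  rewrite /extend {2}eZ (step_delta_diff pid_ab rd_a_wt_b wt_rd_a) /Z adag_diffKU //.
  by rewrite eA'' eA; apply: step_delta_sub_diff.
have ext_b : extend b Z = A'.
  rewrite /extend {2}/Z (step_delta_diff pid_ba rd_b_wt_a wt_rd_b) eZ adag_diffKU //.
  by rewrite eA' eA2; apply: step_delta_sub_diff.
have dZ : is_ann_dag Z by apply: (ann_dag_of_extends pid_ab); rewrite ?ext_a ?ext_b.
by apply/ann_stepE; split.
Qed.

End Commutation.
End AnnotationDag.

Lemma iota_labP R (x y : elab R) : iota_lab x y ->
  [/\ lpid (und x) <> lpid (und y),
      forall r, lrd (und x) r -> ~ lwt (und y) r &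
      forall r, lrd (und y) r -> ~ lwt (und x) r].
Proof.
case: x => -[p1 rd1 wt1]; case: y => -[p2 rd2 wt2];
  move=> [p12 [_ [/disj_set2P/disj_setPLR d12 /disj_set2P/disj_setPLR d21]]];
  by split=> // /= ep; apply: p12; rewrite ep; apply: prefix_refl.
Qed.

Theorem mainTheorem5 (R : Type) (alpha beta : elab R) (A A' A'' : adag R) :
  pid_ok (lpid (und alpha)) -> pid_ok (lpid (und beta)) ->
  lwt (und alpha) `<=` lrd (und alpha) ->
  lwt (und beta) `<=` lrd (und beta) ->
  iota_lab alpha beta ->
  ann alpha A A' -> ann beta A A'' ->
  ann alpha A'' (odot alpha A'' (diff alpha A A')).
Proof.
case: alpha => a; case: beta => b;
  move=> pid_a pid_b wt_rd_a wt_rd_b /iota_labP[pid_ab rd_a_wt_b rd_b_wt_a].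
- exact: commute_fwd_fwd.
- exact: commute_fwd_bwd.
- exact: commute_bwd_fwd.
- exact: commute_bwd_bwd.
Qed.
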